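(* Let $G$ be a torsion abelian group, $S=\bigoplus_{i\in G}S_i$ a $G$-graded ring and $R=\bigoplus_{i\in G}R_i$ a graded subring of $S$ (so $R_i=R\cap S_i$). Suppose (i) $S=R[v]$ is a polynomial ring in one variable over $R$ for some homogeneous element $v$ of $S$, and (ii) $H=\{i\in G: R_i\neq0\}$ is a subgroup of $G$. Then at least one of the following holds: (a) $S_0$ is a polynomial ring in one variable over $R_0$; (b) there exists $e\in H\setminus\{0\}$ such that, if $k>0$ denotes the order of $e$ in $H$, then for every $r\in R_e\setminus\{0\}$ the localization $(S_0)_{r^k}$ is a polynomial ring in one variable.
   Context: A ring $C$ is a polynomial ring in one variable if there is a subring $A\subseteq C$ such that $C$ is a polynomial ring in one variable over $A$ (the zero ring counts). *)

From HB Require Import structures.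
From mathcomp Require Import all_boot all_order all_algebra.
Set Implicit Arguments. Unset Strict Implicit. Unset Printing Implicit Defensive.
Import GRing.Theory.
Local Open Scope ring_scope.

(* Rings are commutative with 1; the zero ring is allowed (comPzRingType). *)

Definition subring_of (C : pzRingType) (A : pred C) : Prop :=
  1 \in A /\ (forall a b, a \in A -> b \in A -> a - b \in A) /\
  (forall a b, a \in A -> b \in A -> a * b \in A).

Definition poly_expr (C : comPzRingType) (s : seq C) (x : C) : C :=
  \sum_(i < size s) s`_i * x ^+ i.

(* The subring D of C equals A[x] and x is algebraically independent over A,
   i.e. D is a polynomial ring in one variable x over A (A should be a subring
   contained in D). *)
Definition is_poly_ring_in_over (C : comPzRingType) (D A : pred C) (x : C) : Prop :=
  x \in D /\
  (forall c, c \in D -> exists s : seq C, all (fun a => a \in A) s /\ c = poly_expr s x) /\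
  (forall s : seq C, all (fun a => a \in A) s -> poly_expr s x = 0 ->
     all (fun a => a == 0) s).

Definition is_poly_ring1 (L : comPzRingType) : Prop :=
  exists (A : pred L) (x : L), subring_of A /\ is_poly_ring_in_over predT A x.

Definition torsion (G : zmodType) : Prop :=
  forall g : G, exists n, (0 < n)%N /\ g *+ n = 0.

Definition is_grading (G : zmodType) (S : comPzRingType) (Sg : G -> pred S) : Prop :=
  (forall i, 0 \in Sg i) /\
  (forall i a b, a \in Sg i -> b \in Sg i -> a - b \in Sg i) /\
  (forall i j a b, a \in Sg i -> b \in Sg j -> a * b \in Sg (i + j)) /\
  (forall s : S, exists (l : seq G) (f : G -> S),
      uniq l /\ (forall i, f i \in Sg i) /\ s = \sum_(i <- l) f i) /\
  (forall (l : seq G) (f : G -> S), uniq l -> (forall i, f i \in Sg i) ->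
      \sum_(i <- l) f i = 0 -> forall i, i \in l -> f i = 0).

(* R is a graded subring of S: a subring containing the homogeneous
   components of each of its elements (so R = (+)_i R_i, R_i = R cap S_i). *)
Definition graded_subring (G : zmodType) (S : comPzRingType) (Sg : G -> pred S)
  (R : pred S) : Prop :=
  subring_of R /\
  (forall (r : S) (l : seq G) (f : G -> S), r \in R -> uniq l ->
     (forall i, f i \in Sg i) -> r = \sum_(i <- l) f i ->
     forall i, i \in l -> f i \in R).

Definition in_support (G : zmodType) (S : comPzRingType) (Sg : G -> pred S)
  (R : pred S) (i : G) : Prop :=
  exists r, r \in R /\ r \in Sg i /\ r != 0.

Definition support_is_subgroup (G : zmodType) (S : comPzRingType) (Sg : G -> pred S)
  (R : pred S) : Prop :=
  in_support Sg R 0 /\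
  (forall i j, in_support Sg R i -> in_support Sg R j -> in_support Sg R (i - j)).

Definition is_order (G : zmodType) (e : G) (k : nat) : Prop :=
  (0 < k)%N /\ e *+ k = 0 /\ (forall m, (0 < m)%N -> (m < k)%N -> e *+ m != 0).

(* phi : A -> L (defined on the subring A of S) exhibits L as the
   localization A_f of A at f in A (standard characterization up to iso). *)
Definition is_localization (S : comPzRingType) (A : pred S) (f : S)
  (L : comPzRingType) (phi : S -> L) : Prop :=
  phi 1 = 1 /\
  (forall a b, a \in A -> b \in A -> phi (a + b) = phi a + phi b) /\
  (forall a b, a \in A -> b \in A -> phi (a * b) = phi a * phi b) /\
  (exists y, y * phi f = 1) /\
  (forall y : L, exists (a : S) (n : nat), a \in A /\ y * phi f ^+ n = phi a) /\
  (forall a, a \in A -> phi a = 0 -> exists n, f ^+ n * a = 0).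

From HB Require Import structures.
From mathcomp Require Import all_boot all_order all_algebra.
From mathcomp Require Import ring generic_quotient boolp.
Set Implicit Arguments. Unset Strict Implicit. Unset Printing Implicit Defensive.
Import GRing.Theory.
Local Open Scope ring_scope.

(* Let m be the order of the degree d of v modulo H, and w = v ^+ m.  As R_i = 0
   for i outside H, taking degree-0 components in S = R[v] shows that every
   element of S_0 is a sum of terms c_i w^i with c_i in R of degree -i m d, and w
   is algebraically independent over R.  If m d = 0 this says S_0 = R_0[w].
   Otherwise e = - m d is a nonzero element of H; for r in R_e and k the order
   of e, f = r^k has degree 0 and c_i w^i = c_i r^((k-1) i) (r w)^i / f^i, so
   after inverting f the ring S_0 becomes a polynomial ring in r w over the
   localization of R_0. *)

Lemma nth_map0 (U V : nmodType) (g : U -> V) (s : seq U) i :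
  g 0 = 0 -> (map g s)`_i = g s`_i.
Proof.
move=> g0; case: (ltnP i (size s)) => [lt_is|le_si]; first exact: nth_map.
by rewrite !nth_default ?size_map.
Qed.

(** * Polynomial expressions *)

Section PolyExpr.
Variable T : comPzRingType.
Implicit Types (s : seq T) (x t : T).

Lemma poly_exprE s x n : (size s <= n)%N ->
  poly_expr s x = \sum_(i < n) s`_i * x ^+ i.
Proof.
move=> le_sn; rewrite [RHS](bigID (fun i : 'I_n => (i < size s)%N)) /=.
rewrite [X in _ + X]big1 ?addr0; first exact: (big_ord_widen _ (fun i => s`_i * x ^+ i)).
by move=> i; rewrite -leqNgt => /(nth_default 0) ->; rewrite mul0r.
Qed.

Lemma eq_poly_expr s1 s2 x : (forall i, s1`_i = s2`_i) ->
  poly_expr s1 x = poly_expr s2 x.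
Proof.
move=> eq_s; rewrite (@poly_exprE _ _ (maxn (size s1) (size s2))) ?leq_maxl //.
rewrite [RHS](@poly_exprE _ _ (maxn (size s1) (size s2))) ?leq_maxr //.
by apply: eq_bigr => i _; rewrite eq_s.
Qed.

Lemma poly_expr_mulr s x t : poly_expr [seq a * t | a <- s] x = poly_expr s x * t.
Proof.
rewrite /poly_expr size_map mulr_suml; apply: eq_bigr => i _.
by rewrite (nth_map 0) // mulrAC.
Qed.

Lemma poly_expr_mulX s t x :
  poly_expr s (t * x) = poly_expr (mkseq (fun i => s`_i * t ^+ i) (size s)) x.
Proof.
rewrite /poly_expr size_mkseq; apply: eq_bigr => i _.
by rewrite nth_mkseq // exprMn mulrA.
Qed.

Definition stretch n s :=
  mkseq (fun j => if (n %| j)%N then s`_(j %/ n) else 0) (n * size s).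

Lemma nth_stretch n s j : (0 < n)%N ->
  (stretch n s)`_j = if (n %| j)%N then s`_(j %/ n) else 0.
Proof.
move=> n_gt0; case: (ltnP j (n * size s)) => [lt_j|le_j]; first by rewrite nth_mkseq.
rewrite nth_default ?size_mkseq //; case: ifP => // /dvdnP [q def_j].
by move: le_j; rewrite def_j mulnK // mulnC leq_pmul2r // => /(nth_default 0) ->.
Qed.

Lemma poly_expr_stretch n s x : (0 < n)%N ->
  poly_expr (stretch n s) x = poly_expr s (x ^+ n).
Proof.
move=> n_gt0; rewrite /poly_expr size_mkseq.
rewrite -(big_mkord (fun _ => true) (fun i => (stretch n s)`_i * x ^+ i)).
rewrite mulnC big_nat_mul big_mkord; apply: eq_bigr => i _.
rewrite big_ltn ?ltn_pmul2r // big1_seq /= => [|j].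
  by rewrite addr0 nth_stretch // dvdn_mull // mulnK // mulnC exprM.
rewrite mem_index_iota nth_stretch // => /andP [lt_ij lt_ji].
case: ifP => [/dvdnP [q def_j]|]; last by rewrite mul0r.
move: lt_ij lt_ji; rewrite def_j !ltn_pmul2r // ltnS => lt_iq.
by move/(leq_trans lt_iq); rewrite ltnn.
Qed.

Lemma poly_expr_sparse n s x : (0 < n)%N ->
  (forall j, ~~ (n %| j)%N -> s`_j = 0) ->
  poly_expr s x = poly_expr (mkseq (fun i => s`_(n * i)) (size s)) (x ^+ n).
Proof.
move=> n_gt0 s_sparse; rewrite -poly_expr_stretch //; apply: eq_poly_expr => j.
rewrite nth_stretch //; case: ifPn => [/dvdnP [q ->]|/s_sparse //].
rewrite mulnK // mulnC; case: (ltnP q (size s)) => [lt_q|le_q]; first by rewrite nth_mkseq.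
by rewrite !nth_default ?size_mkseq // (leq_trans le_q) ?leq_pmull.
Qed.

Lemma poly_expr_free_expn (A : pred T) x n : (0 < n)%N -> 0 \in A ->
  (forall s, all (fun a => a \in A) s -> poly_expr s x = 0 -> all (fun a => a == 0) s) ->
  forall s, all (fun a => a \in A) s -> poly_expr s (x ^+ n) = 0 -> all (fun a => a == 0) s.
Proof.
move=> n_gt0 A0 x_free s sA; rewrite -poly_expr_stretch // => /x_free x_s.
have /x_s : all (fun a => a \in A) (stretch n s).
  apply/allP => _ /mapP [j _ ->]; case: ifP => // _.
  by case: (ltnP (j %/ n) (size s)) => [/(all_nthP 0 sA)//| /(nth_default 0) ->].
move=> /(all_nthP 0) s0; apply/(all_nthP 0) => i lt_is.
have := s0 (n * i)%N; rewrite nth_stretch // dvdn_mulr // mulKn //.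
by rewrite size_mkseq ltn_pmul2l //; apply.
Qed.

End PolyExpr.

(** * Localization of a commutative ring at an element *)

Section Localization.
Variables (T : comPzRingType) (f : T).

(* The pair (a, n) stands for the fraction a / f ^+ n. *)
Definition frac_equiv (x y : T * nat) : Prop :=
  exists p, f ^+ p * (x.1 * f ^+ y.2 - y.1 * f ^+ x.2) = 0.

Definition frac_equivb x y := `[< frac_equiv x y >].

Lemma frac_equiv_class : equiv_class_of frac_equivb.
Proof.
split.
- by move=> x; apply/asboolP; exists 0%N; rewrite subrr mulr0.
- move=> x y; apply/asboolP/asboolP => -[p hp]; exists p;
  by rewrite -opprB mulrN hp oppr0.
- move=> y x z /asboolP [p hp] /asboolP [q hq]; apply/asboolP; exists (p + q + y.2)%N.
  have -> : f ^+ (p + q + y.2) * (x.1 * f ^+ z.2 - z.1 * f ^+ x.2)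
     = f ^+ (q + z.2) * (f ^+ p * (x.1 * f ^+ y.2 - y.1 * f ^+ x.2))
       + f ^+ (p + x.2) * (f ^+ q * (y.1 * f ^+ z.2 - z.1 * f ^+ y.2)).
    by rewrite !exprD; ring.
  by rewrite hp hq !mulr0 addr0.
Qed.

Canonical frac_equiv_equiv := EquivRelPack frac_equiv_class.
Canonical frac_equiv_encModRel := defaultEncModRel frac_equivb.

Definition loc := {eq_quot frac_equivb}%qT.
HB.instance Definition _ : EqQuotient (T * nat)%type frac_equivb loc :=
  EqQuotient.on loc.
HB.instance Definition _ := Choice.on loc.

Definition frac (x : T * nat) : loc := (\pi_loc x)%qT.

Lemma frac_eqP x y : frac x = frac y <-> frac_equiv x y.
Proof. by split=> [/(eqquotP loc)/asboolP | /asboolP/(eqquotP loc)]. Qed.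

Lemma frac_repr (z : loc) : z = frac (repr z).
Proof. by rewrite /frac reprK. Qed.

Lemma loc_ind (P : loc -> Prop) : (forall x, P (frac x)) -> forall z, P z.
Proof. by move=> Pfrac z; rewrite (frac_repr z). Qed.

Lemma frac_equiv_eq x y : x.2 = y.2 -> x.1 = y.1 -> frac_equiv x y.
Proof. by case: x y => [a n] [b m] /= -> ->; exists 0%N; rewrite subrr mulr0. Qed.

Definition frac_add (x y : T * nat) := (x.1 * f ^+ y.2 + y.1 * f ^+ x.2, (x.2 + y.2)%N).
Definition frac_mul (x y : T * nat) := (x.1 * y.1, (x.2 + y.2)%N).
Definition frac_opp (x : T * nat) := (- x.1, x.2).

Lemma frac_add_equiv x x' y y' :
  frac_equiv x x' -> frac_equiv y y' -> frac_equiv (frac_add x y) (frac_add x' y').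
Proof.
move=> [p hp] [q hq]; exists (p + q)%N.
have -> : f ^+ (p + q) * ((frac_add x y).1 * f ^+ (frac_add x' y').2
                          - (frac_add x' y').1 * f ^+ (frac_add x y).2)
  = f ^+ q * f ^+ y.2 * f ^+ y'.2 * (f ^+ p * (x.1 * f ^+ x'.2 - x'.1 * f ^+ x.2))
  + f ^+ p * f ^+ x.2 * f ^+ x'.2 * (f ^+ q * (y.1 * f ^+ y'.2 - y'.1 * f ^+ y.2)).
  by rewrite /= !exprD; ring.
by rewrite hp hq !mulr0 addr0.
Qed.

Lemma frac_mul_equiv x x' y y' :
  frac_equiv x x' -> frac_equiv y y' -> frac_equiv (frac_mul x y) (frac_mul x' y').
Proof.
move=> [p hp] [q hq]; exists (p + q)%N.
have -> : f ^+ (p + q) * ((frac_mul x y).1 * f ^+ (frac_mul x' y').2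
                          - (frac_mul x' y').1 * f ^+ (frac_mul x y).2)
  = f ^+ q * y.1 * f ^+ y'.2 * (f ^+ p * (x.1 * f ^+ x'.2 - x'.1 * f ^+ x.2))
  + f ^+ p * x'.1 * f ^+ x.2 * (f ^+ q * (y.1 * f ^+ y'.2 - y'.1 * f ^+ y.2)).
  by rewrite /= !exprD; ring.
by rewrite hp hq !mulr0 addr0.
Qed.

Lemma frac_opp_equiv x x' : frac_equiv x x' -> frac_equiv (frac_opp x) (frac_opp x').
Proof. by move=> [p hp]; exists p; rewrite /= !mulNr -opprD mulrN hp oppr0. Qed.

Lemma repr_frac x : frac_equiv (repr (frac x)) x.
Proof. by apply/frac_eqP; rewrite -frac_repr. Qed.

Definition loc_add (z z' : loc) := frac (frac_add (repr z) (repr z')).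
Definition loc_mul (z z' : loc) := frac (frac_mul (repr z) (repr z')).
Definition loc_opp (z : loc) := frac (frac_opp (repr z)).

Lemma loc_add_frac x y : loc_add (frac x) (frac y) = frac (frac_add x y).
Proof. by apply/frac_eqP/frac_add_equiv; apply: repr_frac. Qed.
Lemma loc_mul_frac x y : loc_mul (frac x) (frac y) = frac (frac_mul x y).
Proof. by apply/frac_eqP/frac_mul_equiv; apply: repr_frac. Qed.
Lemma loc_opp_frac x : loc_opp (frac x) = frac (frac_opp x).
Proof. by apply/frac_eqP/frac_opp_equiv; apply: repr_frac. Qed.

Lemma loc_addA : associative loc_add.
Proof.
elim/loc_ind=> x; elim/loc_ind=> y; elim/loc_ind=> z; rewrite !loc_add_frac.
by apply/frac_eqP/frac_equiv_eq; rewrite /= ?addnA // !exprD; ring.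
Qed.
Lemma loc_addC : commutative loc_add.
Proof.
elim/loc_ind=> x; elim/loc_ind=> y; rewrite !loc_add_frac.
by apply/frac_eqP/frac_equiv_eq => /=; [exact: addnC | ring].
Qed.
Lemma loc_add0 : left_id (frac (0, 0%N)) loc_add.
Proof.
elim/loc_ind=> x; rewrite loc_add_frac.
by apply/frac_eqP/frac_equiv_eq => /=; ring.
Qed.
Lemma loc_addN : left_inverse (frac (0, 0%N)) loc_opp loc_add.
Proof.
elim/loc_ind=> x; rewrite loc_opp_frac loc_add_frac.
by apply/frac_eqP; exists 0%N => /=; ring.
Qed.

HB.instance Definition _ := GRing.isZmodule.Build loc loc_addA loc_addC loc_add0 loc_addN.

Lemma loc_mulA : associative loc_mul.
Proof.
elim/loc_ind=> x; elim/loc_ind=> y; elim/loc_ind=> z; rewrite !loc_mul_frac.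
by apply/frac_eqP/frac_equiv_eq; rewrite /= ?addnA //; ring.
Qed.
Lemma loc_mulC : commutative loc_mul.
Proof.
elim/loc_ind=> x; elim/loc_ind=> y; rewrite !loc_mul_frac.
by apply/frac_eqP/frac_equiv_eq => /=; [exact: addnC | ring].
Qed.
Lemma loc_mul1 : left_id (frac (1, 0%N)) loc_mul.
Proof.
elim/loc_ind=> x; rewrite loc_mul_frac.
by apply/frac_eqP/frac_equiv_eq => /=; ring.
Qed.
Lemma loc_mulDl : left_distributive loc_mul loc_add.
Proof.
elim/loc_ind=> x; elim/loc_ind=> y; elim/loc_ind=> z.
rewrite !(loc_add_frac, loc_mul_frac); apply/frac_eqP.
by exists 0%N; rewrite /= !exprD; ring.
Qed.

HB.instance Definition _ :=
  GRing.Zmodule_isComPzRing.Build loc loc_mulA loc_mulC loc_mul1 loc_mulDl.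

Definition tofrac (a : T) : loc := frac (a, 0%N).

Lemma tofrac_is_zmod_morphism : zmod_morphism tofrac.
Proof.
move=> a b; rewrite /tofrac [- frac _]loc_opp_frac [RHS]loc_add_frac.
by apply/frac_eqP/frac_equiv_eq => /=; ring.
Qed.

Lemma tofrac_is_monoid_morphism : monoid_morphism tofrac.
Proof.
split=> // a b; rewrite /tofrac [RHS]loc_mul_frac.
by apply/frac_eqP/frac_equiv_eq.
Qed.

HB.instance Definition _ :=
  GRing.isZmodMorphism.Build T loc tofrac tofrac_is_zmod_morphism.
HB.instance Definition _ :=
  GRing.isMonoidMorphism.Build T loc tofrac tofrac_is_monoid_morphism.

Lemma tofrac_inv : frac (1, 1%N) * tofrac f = 1.
Proof. by rewrite [_ * _]loc_mul_frac; apply/frac_eqP; exists 0%N => /=; ring. Qed.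

Lemma frac_mulXn a n : frac (a, n) * tofrac f ^+ n = tofrac a.
Proof.
elim: n a => [|n IHn] a; first by rewrite mulr1.
rewrite exprS mulrA -[RHS]IHn; congr (_ * _); rewrite [_ * _]loc_mul_frac.
by apply/frac_eqP; exists 0%N; rewrite /frac_mul /= addn0 exprS; ring.
Qed.

Lemma tofrac_eq0 a : tofrac a = 0 -> exists p, f ^+ p * a = 0.
Proof. by move/frac_eqP => [p]; rewrite /= !mulr1 subr0; exists p. Qed.

End Localization.

Section SubringType.
Variables (S : comPzRingType) (P : pred S).
Hypothesis P_subring : subring_closed P.
#[local] HB.instance Definition _ := GRing.isSubringClosed.Build S P P_subring.

Record subring_elt := SubringElt { subring_val : S; _ : P subring_val }.
Definition subring_type of subring_closed P := subring_elt.
Local Notation T := (subring_type P_subring).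

HB.instance Definition _ := [isSub of T for subring_val].
HB.instance Definition _ := [Choice of T by <:].
HB.instance Definition _ := GRing.SubChoice_isSubComPzRing.Build S P T P_subring.

Lemma exists_localization f : f \in P ->
  exists (L : comPzRingType) (phi : S -> L), is_localization P f phi.
Proof.
move=> fP; pose F : T := insubd 0 f; pose phi s := tofrac F (insubd 0 s).
exists (loc F), phi; split; [|split; [|split; [|split; [|split]]]].
- rewrite /phi (_ : insubd 0 1 = 1) ?rmorph1 //.
  by apply: val_inj; rewrite insubdK ?rpred1.
- move=> a b aP bP; rewrite /phi -rmorphD; congr tofrac; apply: val_inj.
  by rewrite rmorphD /= !insubdK ?rpredD.
- move=> a b aP bP; rewrite /phi -rmorphM; congr tofrac; apply: val_inj.
  by rewrite rmorphM /= !insubdK ?rpredM.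
- by exists (frac F (1, 1%N)); apply: tofrac_inv.
- elim/loc_ind=> -[x n]; exists (val x), n; split; first exact: valP.
  by rewrite /phi valKd frac_mulXn.
- move=> a aP /tofrac_eq0 [p /(congr1 val)].
  by rewrite rmorphM rmorphXn /= !insubdK // => fa0; exists p.
Qed.

End SubringType.

Section LocalizedPolyRing.
Variables (S L : comPzRingType) (P B : pred S) (f y : S) (phi : S -> L).
Hypotheses (P_subring : subring_closed P) (B_subring : subring_closed B).
Hypotheses (BP : {subset B <= P}) (fB : f \in B) (yP : y \in P).
Hypothesis phi_loc : is_localization P f phi.
(* After inverting f, P becomes a polynomial ring in y over B. *)
Hypothesis y_gen : forall s, s \in P ->
  exists m c, all (fun a => a \in B) c /\ f ^+ m * s = poly_expr c y.
Hypothesis y_free : forall c, all (fun a => a \in B) c -> poly_expr c y = 0 ->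
  forall i, exists p, f ^+ p * c`_i = 0.

#[local] HB.instance Definition _ := GRing.isSubringClosed.Build S P P_subring.
#[local] HB.instance Definition _ := GRing.isSubringClosed.Build S B B_subring.

Let phi1 : phi 1 = 1. Proof. by case: phi_loc. Qed.
Let phiD : {in P &, {morph phi : a b / a + b}}. Proof. by case: phi_loc => _ []. Qed.
Let phiM : {in P &, {morph phi : a b / a * b}}. Proof. by case: phi_loc => _ [_ []]. Qed.

Let phi0 : phi 0 = 0.
Proof. by apply: (@addrI _ (phi 0)); rewrite -phiD ?rpred0 // !addr0. Qed.

Let phiX a n : a \in P -> phi (a ^+ n) = phi a ^+ n.
Proof.
by move=> aP; elim: n => [|n IHn]; rewrite ?phi1 // !exprS phiM ?rpredX // IHn.
Qed.

Lemma poly_expr_phi c : all (fun a => a \in P) c ->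
  phi (poly_expr c y) = poly_expr (map phi c) (phi y).
Proof.
move=> cP; rewrite /poly_expr size_map.
apply: (proj2 (big_ind2 (fun s t => s \in P /\ phi s = t) _ _ _)).
- by rewrite rpred0 phi0.
- by move=> s1 t1 s2 t2 [s1P <-] [s2P <-]; rewrite rpredD // phiD.
move=> i _.
have ciP : c`_i \in P by apply/(all_nthP 0 cP).
  by rewrite rpredM ?rpredX // phiM ?rpredX // phiX // (nth_map 0).
Qed.

Let phiB : {in P &, {morph phi : a b / a - b}}.
Proof.
by move=> a b aP bP; apply: (@addIr _ (phi b)); rewrite -phiD ?rpredB // !subrK.
Qed.

Let phif_cancel z n : z * phi f ^+ n = 0 -> z = 0.
Proof.
case: phi_loc => _ [_ [_ [[u uf1] _]]] zf0.
by rewrite -[z]mulr1 -(expr1n _ n) -uf1 exprMn mulrCA zf0 mulr0.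
Qed.

Let nth_B c i : all (fun a => a \in B) c -> c`_i \in B.
Proof.
move=> cB; case: (ltnP i (size c)) => [/(all_nthP 0 cB)//|].
by move/(nth_default 0) ->; rewrite rpred0.
Qed.

Definition locB : pred L :=
  fun z => `[< exists a n, a \in B /\ z * phi f ^+ n = phi a >].

Lemma locB_subring : subring_closed locB.
Proof.
split; first by apply/asboolP; exists 1, 0%N; rewrite rpred1 mulr1 phi1.
- move=> z1 z2 /asboolP [a1 [n1 [a1B e1]]] /asboolP [a2 [n2 [a2B e2]]]; apply/asboolP.
  exists (a1 * f ^+ n2 - a2 * f ^+ n1), (n1 + n2)%N; rewrite rpredB ?rpredM ?rpredX //.
  rewrite phiB ?rpredM ?rpredX ?BP // !phiM ?rpredX ?BP // !phiX ?BP // -e1 -e2.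
  by split=> //; rewrite exprD; ring.
- move=> z1 z2 /asboolP [a1 [n1 [a1B e1]]] /asboolP [a2 [n2 [a2B e2]]]; apply/asboolP.
  exists (a1 * a2), (n1 + n2)%N; rewrite rpredM // phiM ?BP // -e1 -e2.
  by split=> //; rewrite exprD; ring.
Qed.

Lemma locB_common_denominator c : all (fun z => z \in locB) c ->
  exists M c', all (fun a => a \in B) c' /\ forall i, c`_i * phi f ^+ M = phi c'`_i.
Proof.
elim: c => [|z c IHc] /=.
  by exists 0%N, [::]; split=> // i; rewrite !nth_nil mul0r phi0.
case/andP=> /asboolP [a [n [aB za]]] /IHc [M [c' [c'B cc']]].
exists (n + M)%N, (a * f ^+ M :: [seq b * f ^+ n | b <- c']); split.
  rewrite /= rpredM ?rpredX //=; apply/allP => _ /mapP [b bc' ->].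
  by rewrite rpredM ?rpredX //; apply: (allP c'B).
case=> [|i] /=; first by rewrite exprD mulrA za phiM ?phiX ?BP ?rpredX.
rewrite (nth_map0 _ _ (mul0r (f ^+ n))) phiM ?phiX ?rpredX ?BP ?nth_B //.
by rewrite -cc' exprD mulrA mulrAC.
Qed.

Lemma locB_gen z : exists c, all (fun z => z \in locB) c /\ z = poly_expr c (phi y).
Proof.
case: phi_loc => _ [_ [_ [[u uf1] [phi_surj _]]]].
case: (phi_surj z) => s [n [sP zs]]; case: (y_gen sP) => m [c [cB fs]].
exists [seq b * u ^+ (n + m) | b <- map phi c]; split.
  apply/allP => _ /mapP [_ /mapP [a ac ->] ->]; apply/asboolP; exists a, (n + m)%N.
  by split; [apply: (allP cB) | rewrite -mulrA -exprMn uf1 expr1n mulr1].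
rewrite poly_expr_mulr -poly_expr_phi ?(sub_all BP) // -fs phiM ?rpredX ?(BP fB) //.
rewrite phiX ?(BP fB) // -zs; transitivity (z * (u * phi f) ^+ (n + m)).
  by rewrite uf1 expr1n mulr1.
by rewrite exprMn !exprD; ring.
Qed.

Lemma locB_free c : all (fun z => z \in locB) c -> poly_expr c (phi y) = 0 ->
  all (fun z => z == 0) c.
Proof.
case: phi_loc => _ [_ [_ [_ [_ phi_ker]]]] cB c0.
case: (locB_common_denominator cB) => M [c' [c'B cc']].
have c'P : poly_expr c' y \in P.
  by apply: rpred_sum => i _; rewrite rpredM ?rpredX // BP ?nth_B.
have : phi (poly_expr c' y) = 0.
  rewrite poly_expr_phi ?(sub_all BP) // -(mul0r (phi f ^+ M)) -c0 -poly_expr_mulr.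
  apply: eq_poly_expr => i.
  by rewrite (nth_map0 _ _ phi0) (nth_map0 _ _ (mul0r (phi f ^+ M))).
case/(phi_ker _ c'P) => p fp0.
have c'pB : all (fun a => a \in B) [seq b * f ^+ p | b <- c'].
  by apply/allP => _ /mapP [b bc' ->]; rewrite rpredM ?rpredX //; apply: (allP c'B).
have c'p0 : poly_expr [seq b * f ^+ p | b <- c'] y = 0 by rewrite poly_expr_mulr mulrC.
apply/(all_nthP 0) => i _; apply/eqP/(@phif_cancel _ M); rewrite cc'.
have [q] := y_free c'pB c'p0 i; rewrite (nth_map0 _ _ (mul0r (f ^+ p))).
have c'iP : c'`_i \in P by rewrite BP ?nth_B.
rewrite mulrCA -exprD => /(congr1 phi).
by rewrite phi0 phiM ?rpredX ?(BP fB) // phiX ?(BP fB) // => /phif_cancel.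
Qed.

Lemma localization_is_poly_ring1 : is_poly_ring1 L.
Proof.
exists locB, (phi y); split; first by case: locB_subring.
split=> //; split=> [z _|]; [exact: locB_gen | exact: locB_free].
Qed.

End LocalizedPolyRing.

(** * Graded rings *)

Lemma sum_supset (I : eqType) (V : nmodType) (l L : seq I) (F : I -> V) :
  uniq l -> uniq L -> {subset l <= L} -> (forall i, i \notin l -> F i = 0) ->
  \sum_(i <- L) F i = \sum_(i <- l) F i.
Proof.
move=> ul uL sub_lL F0; rewrite (bigID (mem l)) /= [X in _ + X]big1 ?addr0; last first.
  by move=> i /F0.
rewrite -big_filter; apply/perm_big/uniq_perm; rewrite ?filter_uniq // => i.
by rewrite mem_filter; case: (boolP (i \in l)) => // /sub_lL ->.
Qed.

Lemma exists_order (G : zmodType) (g : G) :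
  (exists n, (0 < n)%N /\ g *+ n = 0) -> exists k, is_order g k.
Proof.
move=> [n [n_gt0 gn0]].
have ex_n : exists n, (0 < n)%N && (g *+ n == 0) by exists n; rewrite n_gt0 gn0 eqxx.
case: (ex_minnP ex_n) => k /andP [k_gt0 /eqP gk0] k_min.
exists k; do 2!split=> //; move=> m m_gt0.
by apply: contraTneq => gm0; rewrite -leqNgt k_min ?m_gt0 ?gm0 ?eqxx.
Qed.

Section Grading.
Variables (G : zmodType) (S : comPzRingType) (Sg : G -> pred S).
Hypothesis S_graded : is_grading Sg.

Lemma homog0 i : 0 \in Sg i.
Proof. by case: S_graded. Qed.

Lemma homogB i a b : a \in Sg i -> b \in Sg i -> a - b \in Sg i.
Proof. by case: S_graded => _ [SB _]; apply: SB. Qed.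

Lemma homogM i j a b : a \in Sg i -> b \in Sg j -> a * b \in Sg (i + j).
Proof. by case: S_graded => _ [_ [SM _]]; apply: SM. Qed.

Lemma homog_sum_inj l1 l2 (F1 F2 : G -> S) : uniq l1 -> uniq l2 ->
  (forall i, F1 i \in Sg i) -> (forall i, F2 i \in Sg i) ->
  (forall i, i \notin l1 -> F1 i = 0) -> (forall i, i \notin l2 -> F2 i = 0) ->
  \sum_(i <- l1) F1 i = \sum_(i <- l2) F2 i -> F1 =1 F2.
Proof.
move=> ul1 ul2 F1S F2S F10 F20 eqF; set L := undup (l1 ++ l2).
have sub1 : {subset l1 <= L} by move=> i; rewrite mem_undup mem_cat => ->.
have sub2 : {subset l2 <= L} by move=> i; rewrite mem_undup mem_cat orbC => ->.
have : \sum_(i <- L) (F1 i - F2 i) = 0.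
  by rewrite sumrB (@sum_supset _ _ l1 L) ?(@sum_supset _ _ l2 L) ?undup_uniq // eqF subrr.
case: S_graded => _ [_ [_ [_ S_direct]]].
move/(S_direct L (fun i => F1 i - F2 i) (undup_uniq _) (fun i => homogB (F1S i) (F2S i))).
move=> F12 i; case: (boolP (i \in L)) => [/F12/eqP | ]; first by rewrite subr_eq0 => /eqP.
by rewrite mem_undup mem_cat negb_or => /andP [i1 i2]; rewrite F10 ?F20.
Qed.

Lemma homog_decomposition s : exists lF : seq G * (G -> S),
  [/\ uniq lF.1, forall i, lF.2 i \in Sg i, forall i, i \notin lF.1 -> lF.2 i = 0
    & s = \sum_(i <- lF.1) lF.2 i].
Proof.
case: S_graded => _ [_ [_ [S_dec _]]]; case: (S_dec s) => l [F [ul [FS ->]]].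
exists (l, fun i => if i \in l then F i else 0); split=> //= [i|i /negPf -> //|].
  by case: ifP; rewrite ?homog0.
by apply: eq_big_seq => i ->.
Qed.

Definition hsupp s : seq G := (sval (cid (homog_decomposition s))).1.
Definition hcomp i s : S := (sval (cid (homog_decomposition s))).2 i.

Lemma hcompP s : [/\ uniq (hsupp s), forall i, hcomp i s \in Sg i,
  forall i, i \notin hsupp s -> hcomp i s = 0 & s = \sum_(i <- hsupp s) hcomp i s].
Proof. exact: (svalP (cid (homog_decomposition s))). Qed.

Lemma hcomp_homog i s : hcomp i s \in Sg i.
Proof. by case: (hcompP s). Qed.

Lemma hcomp_unique s l (F : G -> S) : uniq l -> (forall i, F i \in Sg i) ->
  (forall i, i \notin l -> F i = 0) -> s = \sum_(i <- l) F i -> forall i, hcomp i s = F i.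
Proof.
move=> ul FS F0 sF; case: (hcompP s) => us sS s0 sE.
by apply: (homog_sum_inj us ul) => //; rewrite /= -sE.
Qed.

Lemma hcompB i : zmod_morphism (hcomp i).
Proof.
move=> s t; case: (hcompP s) => us _ s0 sE; case: (hcompP t) => ut _ t0 tE.
set L := undup (hsupp s ++ hsupp t).
apply: (@hcomp_unique _ L (fun i => hcomp i s - hcomp i t)) => [||j|].
- exact: undup_uniq.
- by move=> j; rewrite homogB ?hcomp_homog.
- by rewrite mem_undup mem_cat negb_or => /andP [js jt]; rewrite s0 ?t0 ?subrr.
rewrite sumrB (@sum_supset _ _ (hsupp s) L) ?(@sum_supset _ _ (hsupp t) L) //;
  rewrite -?sE -?tE ?undup_uniq // => j.
all: by rewrite mem_undup mem_cat => ->; rewrite ?orbT.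
Qed.

HB.instance Definition _ i := GRing.isZmodMorphism.Build S S (hcomp i) (hcompB i).

Lemma hcomp_homog_id h t i : t \in Sg h -> hcomp i t = if i == h then t else 0.
Proof.
move=> th; apply: (@hcomp_unique t [:: h] (fun j => if j == h then t else 0)) => // [j|j|].
- by case: eqP => [->|_]; rewrite ?homog0.
- by rewrite inE => /negPf ->.
- by rewrite big_seq1 eqxx.
Qed.

Lemma hcompMr h x t i : x \in Sg h -> hcomp i (t * x) = hcomp (i - h) t * x.
Proof.
move=> xh; case: (hcompP t) => ut _ t0 tE.
apply: (@hcomp_unique _ [seq j + h | j <- hsupp t] (fun j => hcomp (j - h) t * x))
  => [||j jt|].
- by rewrite map_inj_uniq //; apply: addIr.
- by move=> j; rewrite -{2}(subrK h j) homogM ?hcomp_homog.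
- rewrite t0 ?mul0r //; apply: contra jt => jt.
  by apply/mapP; exists (j - h); rewrite ?subrK.
rewrite big_map {1}tE mulr_suml; apply: eq_bigr => j _.
by rewrite addrK.
Qed.

(* The degree-0 component of 1 is a unit element, first for homogeneous
   elements, then for all of S. *)
Lemma homog1 : 1 \in Sg 0.
Proof.
have unit_homog h x : x \in Sg h -> hcomp 0 1 * x = x.
  by move=> xh; rewrite -(subrr h) -hcompMr // mul1r (hcomp_homog_id _ xh) eqxx.
have unit_e y : hcomp 0 1 * y = y.
  case: (hcompP y) => _ yS _ ->; rewrite mulr_sumr; apply: eq_bigr => i _.
  exact: unit_homog (yS i).
by rewrite -(unit_e 1) mulr1 hcomp_homog.
Qed.

Lemma homogX h x n : x \in Sg h -> x ^+ n \in Sg (h *+ n).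
Proof.
move=> xh; elim: n => [|n IHn]; first by rewrite expr0 mulr0n homog1.
by rewrite exprS mulrS homogM.
Qed.

Section GradedPolyRing.
Variables (R : pred S) (v : S) (d : G).
Hypotheses (G_torsion : torsion G) (R_graded : graded_subring Sg R).
Hypotheses (vd : v \in Sg d) (v_free : is_poly_ring_in_over predT R v).
Hypothesis H_subgroup : support_is_subgroup Sg R.

Lemma graded_subring_closed : subring_closed R.
Proof. by case: R_graded => -[R1 [RB RM]] _; split. Qed.

#[local] HB.instance Definition _ := GRing.isSubringClosed.Build S R graded_subring_closed.

Lemma hcomp_R i a : a \in R -> hcomp i a \in R.
Proof.
move=> aR; case: (hcompP a) => ua aS a0 aE.
case: (boolP (i \in hsupp a)) => [ia | /a0 ->]; last exact: rpred0.
by case: R_graded => _ /(_ a _ _ aR ua aS aE); apply.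
Qed.

Local Notation H := (in_support Sg R).

Lemma support0 : H 0. Proof. by case: H_subgroup. Qed.

Lemma supportB i j : H i -> H j -> H (i - j). Proof. by case: H_subgroup => _; apply. Qed.

Lemma supportN i : H i -> H (- i).
Proof. by move/(supportB support0); rewrite sub0r. Qed.

Lemma supportMn i n : H i -> H (i *+ n).
Proof.
move=> Hi; elim: n => [|n IHn]; first by rewrite mulr0n; apply: support0.
by rewrite mulrS -[_ *+ n]opprK; apply/supportB/supportN.
Qed.

Definition d_mult_in_H n := (0 < n)%N && `[< H (d *+ n) >].

Lemma exists_d_mult_in_H : exists n, d_mult_in_H n.
Proof.
have [n [n_gt0 dn0]] := G_torsion d; exists n.
by rewrite /d_mult_in_H n_gt0 dn0; apply/asboolP; apply: support0.
Qed.

Definition ordH := ex_minn exists_d_mult_in_H.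

Lemma ordH_spec : [/\ (0 < ordH)%N, H (d *+ ordH) & forall j, H (d *+ j) -> (ordH %| j)%N].
Proof.
rewrite /ordH; case: ex_minnP => m /andP [m_gt0 /asboolP Hdm] m_min; split=> // j Hdj.
apply: contraT; rewrite /dvdn -lt0n => r_gt0.
have /supportB/(_ (supportMn (j %/ m) Hdm)) : H (d *+ j) by [].
rewrite {1}(divn_eq j m) mulrnDr -mulrnA mulnC addrAC subrr add0r => Hdr.
have := m_min _ (introT andP (conj r_gt0 (introT (asboolP _) Hdr))).
by rewrite leqNgt ltn_pmod.
Qed.

(* vH is the least power of v whose degree, - eH, lies in H. *)
Definition vH := v ^+ ordH.
Definition eH := - (d *+ ordH).

Lemma vH_homog : vH \in Sg (- eH).
Proof. by rewrite opprK homogX. Qed.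

Lemma eH_support : H eH.
Proof. by case: ordH_spec => _ Hd _; apply: supportN. Qed.

Lemma vH_free c : all (fun a => a \in R) c -> poly_expr c vH = 0 ->
  all (fun a => a == 0) c.
Proof.
case: v_free => _ [_ v_indep]; case: ordH_spec => ordH_gt0 _ _.
exact: poly_expr_free_expn ordH_gt0 (rpred0 _) v_indep c.
Qed.

Lemma degree0_expansion s : s \in Sg 0 ->
  exists c, (forall i, c`_i \in R /\ c`_i \in Sg (eH *+ i)) /\ s = poly_expr c vH.
Proof.
move=> s0; case: v_free => _ [/(_ s isT) [a [aR sa]] _].
case: ordH_spec => ordH_gt0 _ ordH_dvd.
pose b := mkseq (fun j => hcomp (- (d *+ j)) a`_j) (size a).
have bRS j : b`_j \in R /\ b`_j \in Sg (- (d *+ j)).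
  case: (ltnP j (size a)) => [lt_ja | le_aj].
    by rewrite nth_mkseq // hcomp_homog hcomp_R //; apply: (all_nthP 0 aR).
  by rewrite nth_default ?size_mkseq ?rpred0 ?homog0.
have sb : s = poly_expr b v.
  have := hcomp_homog_id 0 s0; rewrite eqxx => <-.
  rewrite {1}sa /poly_expr raddf_sum size_mkseq; apply: eq_bigr => j _.
  by rewrite /= (hcompMr _ _ (homogX j vd)) sub0r nth_mkseq.
have b_sparse j : ~~ (ordH %| j)%N -> b`_j = 0.
  apply: contraNeq => bj0; apply: ordH_dvd; rewrite -[d *+ j]opprK; apply: supportN.
  by case: (bRS j) => bR bS; exists b`_j.
exists (mkseq (fun i => b`_(ordH * i)) (size b)).
split; last by rewrite sb /vH; apply: poly_expr_sparse.
move=> i; rewrite size_mkseq; case: (ltnP i (size a)) => [lt_ia | le_ai].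
  by rewrite nth_mkseq // /eH mulNrn -mulrnA; apply: bRS.
by rewrite nth_default ?size_mkseq // rpred0 homog0.
Qed.

Lemma degree0_poly_ring : eH = 0 ->
  is_poly_ring_in_over (Sg 0) (fun a => (a \in R) && (a \in Sg 0)) vH.
Proof.
move=> e0; split; first by have := vH_homog; rewrite e0 oppr0.
split=> [s /degree0_expansion [c [cRS sc]] | c cR0].
  exists c; split=> //; apply/(all_nthP 0) => i _.
  by case: (cRS i); rewrite e0 mul0rn => cR c0; apply/andP.
by apply: vH_free; apply: sub_all cR0 => a /andP [].
Qed.

Section LocalizedDegree0.
Variables (k : nat) (r : S).
Hypotheses (k_gt0 : (0 < k)%N) (ek : eH *+ k = 0) (rR : r \in R) (re : r \in Sg eH).

Local Notation R0 := (fun a => (a \in R) && (a \in Sg 0)).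

Let homog0M a b : a \in Sg 0 -> b \in Sg 0 -> a * b \in Sg 0.
Proof. by move=> a0 b0; rewrite -(addr0 0) homogM. Qed.

Let homog0_subring : subring_closed (Sg 0).
Proof. by split=> [|a b a0 b0|]; rewrite ?homog1 ?homogB. Qed.

Let R0_subring : subring_closed R0.
Proof.
split=> [|a b /andP [aR a0] /andP [bR b0]|a b /andP [aR a0] /andP [bR b0]].
- by apply/andP; rewrite rpred1 homog1.
- by apply/andP; rewrite rpredB ?homogB.
- by apply/andP; rewrite rpredM ?homog0M.
Qed.

Let rk0 : r ^+ k \in Sg 0.
Proof. by rewrite -ek homogX. Qed.

Let rvH0 : r * vH \in Sg 0.
Proof. by have := homogM re vH_homog; rewrite subrr. Qed.

Let expr_rk i : (r ^+ k) ^+ i = r ^+ i * r ^+ (k.-1 * i).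
Proof. by rewrite -exprD -mulSn prednK // exprM. Qed.

Lemma degree0_gen_rvH s : s \in Sg 0 ->
  exists m c, all R0 c /\ (r ^+ k) ^+ m * s = poly_expr c (r * vH).
Proof.
(* (r ^+ k) ^+ i * c_i * vH ^+ i = c_i * r ^+ ((k - 1) * i) * (r * vH) ^+ i *)
case/degree0_expansion => c [cRS ->]; exists (size c).
exists (mkseq (fun i => (r ^+ k) ^+ (size c - i) * (c`_i * r ^+ (k.-1 * i))) (size c)).
split.
  apply/allP => _ /mapP [i _ ->]; case: (cRS i) => ciR ciS.
  apply/andP; split; first by rewrite !(rpredM, rpredX).
  apply: homog0M; first by rewrite -(mul0rn _ (size c - i)) homogX.
  have := homogM ciS (homogX (k.-1 * i) re).
  by rewrite -mulrnDr -mulSn prednK // mulrnA ek mul0rn.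
rewrite /poly_expr size_mkseq mulr_sumr; apply: eq_bigr => i _.
rewrite nth_mkseq // -{1}(subnK (ltnW (ltn_ord i))) exprD [(r ^+ k) ^+ i]expr_rk exprMn.
by ring.
Qed.

Lemma degree0_free_rvH c : all R0 c -> poly_expr c (r * vH) = 0 ->
  forall i, exists p, (r ^+ k) ^+ p * c`_i = 0.
Proof.
move=> cR0; rewrite poly_expr_mulX => /vH_free cr0 i; exists i.
have /cr0 /(all_nthP 0) cr0i :
    all (fun a => a \in R) (mkseq (fun i => c`_i * r ^+ i) (size c)).
  apply/allP => _ /mapP [j _ ->]; rewrite rpredM ?rpredX //.
  case: (ltnP j (size c)) => [/(all_nthP 0 cR0)/andP [] // | ].
  by move/(nth_default 0) ->; rewrite rpred0.
case: (ltnP i (size c)) => [lt_ic | le_ci]; last by rewrite nth_default // mulr0.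
have := cr0i i; rewrite size_mkseq nth_mkseq // => /(_ lt_ic)/eqP cri0.
by rewrite expr_rk mulrC mulrA cri0 mul0r.
Qed.

Lemma localized_degree0_poly_ring : exists (L : comPzRingType) (phi : S -> L),
  is_localization (Sg 0) (r ^+ k) phi /\ is_poly_ring1 L.
Proof.
have [L [phi phi_loc]] := exists_localization homog0_subring rk0.
exists L, phi; split=> //.
apply: (localization_is_poly_ring1 homog0_subring R0_subring _ _ rvH0 phi_loc).
- by move=> a /andP [].
- by apply/andP; rewrite rpredX ?rk0.
- exact: degree0_gen_rvH.
- exact: degree0_free_rvH.
Qed.

End LocalizedDegree0.

End GradedPolyRing.
End Grading.

Theorem lemma4p2 (G : zmodType) (S : comPzRingType) (Sg : G -> pred S)
  (R : pred S) (v : S) (d : G) :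
  torsion G ->
  is_grading Sg ->
  graded_subring Sg R ->
  v \in Sg d ->
  is_poly_ring_in_over predT R v ->
  support_is_subgroup Sg R ->
  (exists x : S,
     is_poly_ring_in_over (Sg 0) (fun a => (a \in R) && (a \in Sg 0)) x)
  \/
  (exists (e : G) (k : nat),
     e != 0 /\ in_support Sg R e /\ is_order e k /\
     forall r : S, r \in R -> r \in Sg e -> r != 0 ->
       exists (L : comPzRingType) (phi : S -> L),
         is_localization (Sg 0) (r ^+ k) phi /\ is_poly_ring1 L).
Proof.
move=> G_torsion S_graded R_graded vd v_free H_subgroup.
have [e0 | e_neq0] := eqVneq (eH d G_torsion H_subgroup) 0.
  by left; exists (vH v d G_torsion H_subgroup); apply: degree0_poly_ring.
right; have [k k_order] := exists_order (G_torsion (eH d G_torsion H_subgroup)).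
exists (eH d G_torsion H_subgroup), k.
split=> //; split; first exact: (eH_support d G_torsion H_subgroup).
split=> // r rR re _; case: k_order => k_gt0 [ek _].
exact: (localized_degree0_poly_ring S_graded R_graded vd v_free k_gt0 ek rR re).
Qed.
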